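(* Let $d\le n$ be nonnegative integers and let $\mathcal P_d$ be the linear operator on functions $f:\{\pm1\}^n\to\mathbb R$ mapping $f=\sum_{\alpha\subseteq[n]}\hat f_\alpha\chi_\alpha$ to its low-degree part $\sum_{|\alpha|\le d}\hat f_\alpha\chi_\alpha$, where $\chi_\alpha(x)=\prod_{i\in\alpha}x_i$. Then $\textsf{Tensor-SDP}(\mathcal P_d)\le 9^d$.
   Context: A level-$r$ pseudo-expectation functional on polynomials in variables $y_1,\dots,y_N$ is a map $\tilde{\mathbb E}$ from real polynomials of degree at most $r$ to $\mathbb R$ that is linear, satisfies $\tilde{\mathbb E}[1]=1$, and satisfies $\tilde{\mathbb E}[P^2]\ge 0$ for every polynomial $P$ of degree at most $r/2$. For a linear operator $A$ from functions on a finite set $\mathcal U$ to functions on a finite set $\mathcal V$, $\textsf{Tensor-SDP}^{(r)}(A)$ is the maximum of $\tilde{\mathbb E}_f\|Af\|_4^4$ over level-$r$ pseudo-expectation functionals $\tilde{\mathbb E}$ on polynomials in the variables $\{f(u)\}_{u\in\mathcal U}$ satisfying $\tilde{\mathbb E}_f(\|f\|_2^2-1)^2=0$; here $\|g\|_p=(\mathbb E_{v}|g(v)|^p)^{1/p}$ is the expectation norm (uniform average), so $\|Af\|_4^4$ and $\|f\|_2^2$ are polynomials in the variables $f(u)$. $\textsf{Tensor-SDP}$ denotes $\textsf{Tensor-SDP}^{(4)}$. Expectations over $\{\pm1\}^n$ are with respect to the uniform distribution. *)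

From HB Require Import structures.
From mathcomp Require Import all_boot all_order all_algebra.
From mathcomp Require Import reals.
From mathcomp Require Import mpoly.
Set Implicit Arguments. Unset Strict Implicit. Unset Printing Implicit Defensive.
Import Order.TTheory GRing.Theory Num.Theory.
Local Open Scope ring_scope.

Section Defs.
Variable R : realType.

(* A point x of {+-1}^n is encoded by b : {ffun 'I_n -> bool}, with
   x_i = -1 if b i = true and x_i = 1 otherwise. *)
Definition cube (n : nat) := {ffun 'I_n -> bool}.

Definition coord {n : nat} (x : cube n) (i : 'I_n) : R :=
  if x i then -1 else 1.

Definition chi {n : nat} (alpha : {set 'I_n}) (x : cube n) : R :=
  \prod_(i in alpha) coord x i.

Definition fourier {n : nat} {W : lmodType R} (f : cube n -> W)
  (alpha : {set 'I_n}) : W :=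
  (#|cube n|%:R)^-1 *: \sum_(x : cube n) chi alpha x *: f x.

Definition lowdeg {n : nat} (d : nat) (f : cube n -> R) : cube n -> R :=
  fun x => \sum_(alpha : {set 'I_n} | (#|alpha| <= d)%N)
             @fourier n R^o f alpha * chi alpha x.

Definition fpoly (U : finType) := {mpoly R[#|U|]}.

Definition fvar {U : finType} (u : U) : fpoly U := 'X_(enum_rank u).

(* degree at most r  (msize p = 1 + total degree, or 0 when p = 0) *)
Definition deg_le {U : finType} (p : fpoly U) (r : nat) : bool :=
  (msize p <= r.+1)%N.

Definition pseudo_expectation {U : finType} (r : nat) (E : fpoly U -> R)
  : Prop :=
  [/\ (forall (c : R) (p q : fpoly U), deg_le p r -> deg_le q r ->
         E (c *: p + q) = c * E p + E q),
      E 1 = 1 &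
      (forall P : fpoly U, deg_le P r./2 -> 0 <= E (P * P))].

(* A linear operator A from functions on U to functions on V, applied to
   the formal function f (with f(u) the variable X_u):
   (A f)(v) = sum_u f(u) (A e_u)(v), with e_u the indicator of u. *)
Definition formal_apply {U V : finType} (A : (U -> R) -> (V -> R))
  : V -> fpoly U :=
  fun v => \sum_(u : U) (A (fun u' => (u' == u)%:R) v) *: fvar u.

Definition norm2sq {U : finType} : fpoly U :=
  (#|U|%:R)^-1 *: \sum_(u : U) fvar u ^+ 2.

Definition norm4pow4 {U V : finType} (A : (U -> R) -> (V -> R)) : fpoly U :=
  (#|V|%:R)^-1 *: \sum_(v : V) formal_apply A v ^+ 4.

(* the set of values of the Tensor-SDP^(r) program for A; Tensor-SDP^(r)(A)
   is the supremum (maximum) of this set. *)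
Definition tensor_sdp_value {U V : finType} (r : nat)
  (A : (U -> R) -> (V -> R)) (t : R) : Prop :=
  exists E : fpoly U -> R,
    [/\ pseudo_expectation r E,
        E ((norm2sq - 1) ^+ 2) = 0 &
        t = E (norm4pow4 A)].

End Defs.

From Pilot Require Import Defs.
From HB Require Import structures.
From mathcomp Require Import all_boot all_order all_algebra.
From mathcomp Require Import reals.
From mathcomp Require Import mpoly.
From mathcomp Require Import ring lra zify.
Import Order.TTheory GRing.Theory Num.Theory.
Local Open Scope ring_scope.
Set Implicit Arguments. Unset Strict Implicit. Unset Printing Implicit Defensive.

(* Sum-of-squares proof of Bonami's hypercontractive inequality. Write
   g = P_d f as a function on the cube whose Fourier coefficients are linear
   forms in the variables f(u). Splitting on one coordinate, g = E_i g + x_i D_i g,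
   and bounding the cross term by 2ab <= a^2 + b^2, an induction on the number
   of coordinates the functions depend on shows that
   3^(d1+d2) (sum g^2) (sum k^2) - 2^n sum g^2 k^2 is a sum of squares of
   quadratics when deg g <= d1 and deg k <= d2. With g = k this gives
   E ||P_d f||_4^4 <= 9^d E ||P_d f||_2^4, and ||P_d f||_2^4 <= ||f||_2^4 is an
   SoS inequality because P_d is an orthogonal projection. Finally
   E (||f||_2^2 - 1)^2 = 0 forces E ||f||_2^4 = 1. *)

Section Degree.
Variables (R : realType) (U : finType).
Local Notation P := (fpoly R U).

Lemma deg_le0 k : deg_le (0 : P) k.
Proof. by rewrite /deg_le msize0. Qed.

Lemma deg_le1 k : deg_le (1 : P) k.
Proof. by rewrite /deg_le msize1. Qed.

Lemma deg_leW (p : P) a b : (a <= b)%N -> deg_le p a -> deg_le p b.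
Proof. by rewrite /deg_le => ab /leq_trans; apply; rewrite ltnS. Qed.

Lemma deg_leD (p q : P) k : deg_le p k -> deg_le q k -> deg_le (p + q) k.
Proof. by rewrite /deg_le => hp hq; rewrite (leq_trans (msizeD_le _ _)) // geq_max hp. Qed.

Lemma deg_leB (p q : P) k : deg_le p k -> deg_le q k -> deg_le (p - q) k.
Proof. by move=> hp hq; apply: deg_leD; rewrite // /deg_le msizeN. Qed.

Lemma deg_leZ (c : R) (p : P) k : deg_le p k -> deg_le (c *: p) k.
Proof. exact/leq_trans/msizeZ_le. Qed.

Lemma deg_leMn (p : P) k m : deg_le p k -> deg_le (p *+ m) k.
Proof. by rewrite -scaler_nat; apply: deg_leZ. Qed.

Lemma deg_leM (p q : P) a b : deg_le p a -> deg_le q b -> deg_le (p * q) (a + b).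
Proof.
rewrite /deg_le => hp hq.
have [->|p0] := eqVneq p 0; first by rewrite mul0r msize0.
have [->|q0] := eqVneq q 0; first by rewrite mulr0 msize0.
by rewrite msizeM //; move: (msize p) (msize q) hp hq => x y; lia.
Qed.

Lemma deg_leX (p : P) a m : deg_le p a -> deg_le (p ^+ m) (a * m).
Proof.
move=> hp; elim: m => [|m ih]; first by rewrite expr0 deg_le1.
by rewrite exprS mulnS; apply: deg_leM.
Qed.

Lemma deg_le_sum (I : Type) (s : seq I) (F : I -> P) k :
  (forall i, deg_le (F i) k) -> deg_le (\sum_(i <- s) F i) k.
Proof.
move=> h; apply: (big_ind (fun p : P => deg_le p k)) => //; first exact: deg_le0.
by move=> p q; apply: deg_leD.
Qed.

Lemma deg_le_fvar (u : U) : deg_le (fvar R u) 1.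
Proof. by rewrite /deg_le msizeX mdeg1. Qed.

Lemma deg_le_sum_sqr (I : finType) (p : I -> P) :
  (forall i, deg_le (p i) 1) -> deg_le (\sum_i p i ^+ 2) 2.
Proof. by move=> hp; apply: deg_le_sum => i; apply: (deg_leX 2 (hp i)). Qed.

Definition sos2 (p : P) : Prop :=
  exists s : seq (R * P), all (fun cq => (0 <= cq.1) && deg_le cq.2 2) s /\
    p = \sum_(cq <- s) cq.1 *: cq.2 ^+ 2.

Lemma sos2_0 : sos2 0.
Proof. by exists [::]; rewrite big_nil. Qed.

Lemma sos2D p q : sos2 p -> sos2 q -> sos2 (p + q).
Proof. by move=> [s [hs ->]] [t [ht ->]]; exists (s ++ t); rewrite all_cat hs ht big_cat. Qed.

Lemma sos2Z (c : R) p : 0 <= c -> sos2 p -> sos2 (c *: p).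
Proof.
move=> c0 [s [hs ->]]; exists [seq (c * cq.1, cq.2) | cq <- s]; split.
  by rewrite all_map; apply/allP => cq /(allP hs) /andP[h1 h2] /=; rewrite mulr_ge0.
by rewrite big_map scaler_sumr; apply: eq_bigr => cq _; rewrite scalerA.
Qed.

Lemma sos2Mn p m : sos2 p -> sos2 (p *+ m).
Proof. by rewrite -scaler_nat; apply: sos2Z. Qed.

Lemma sos2_sqr q : deg_le q 2 -> sos2 (q ^+ 2).
Proof. by move=> h; exists [:: (1, q)]; rewrite big_seq1 scale1r /= ler01 h. Qed.

Lemma sos2_sum (I : Type) (s : seq I) (F : I -> P) :
  (forall i, sos2 (F i)) -> sos2 (\sum_(i <- s) F i).
Proof.
move=> h; apply: (big_ind sos2) => //; first exact: sos2_0.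
by move=> p q; apply: sos2D.
Qed.

Lemma sos2_mul_sum_sqr (I J : finType) (g : I -> P) (k : J -> P) :
  (forall i, deg_le (g i) 1) -> (forall j, deg_le (k j) 1) ->
  sos2 ((\sum_i g i ^+ 2) * (\sum_j k j ^+ 2)).
Proof.
move=> hg hk; rewrite mulr_suml; apply: sos2_sum => i; rewrite mulr_sumr.
by apply: sos2_sum => j; rewrite -exprMn; apply/sos2_sqr/(deg_leM (hg i) (hk j)).
Qed.

Lemma sos2_sqr_sub (I J : finType) (p : I -> P) (q : J -> P) :
  (forall i, deg_le (p i) 1) -> (forall j, deg_le (q j) 1) ->
  let A := \sum_i p i ^+ 2 in let B := \sum_j q j ^+ 2 in
  sos2 ((A + B) * (A + B) - B * B).
Proof.
move=> hp hq A B; rewrite (_ : _ - _ = A * A + (A * B) *+ 2); last by ring.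
by apply: sos2D; [|apply: sos2Mn]; apply: sos2_mul_sum_sqr.
Qed.

Lemma deg_le_sos2 p : sos2 p -> deg_le p 4.
Proof.
move=> [s [hs ->]]; elim: s hs => [|[c q] s ih]; first by rewrite big_nil deg_le0.
rewrite big_cons /= => /andP[/andP[_ hq] hs].
by apply: deg_leD (ih hs); apply/deg_leZ/(deg_leX 2 hq).
Qed.

End Degree.

Section PseudoExpectation.
Variables (R : realType) (U : finType) (r : nat) (E : fpoly R U -> R).
Hypotheses (hE : pseudo_expectation r E) (hr : (4 <= r)%N).
Local Notation P := (fpoly R U).

Lemma pexp_lin (c : R) (p q : P) :
  deg_le p 4 -> deg_le q 4 -> E (c *: p + q) = c * E p + E q.
Proof. by case: hE => lin _ _ hp hq; apply: lin; apply: deg_leW hr _. Qed.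

Lemma pexp0 : E 0 = 0.
Proof.
have := @pexp_lin 1 0 0 (deg_le0 _ _ _) (deg_le0 _ _ _).
by rewrite scale1r addr0 mul1r -{1}[E 0]addr0 => /addrI.
Qed.

Lemma pexpZ c p : deg_le p 4 -> E (c *: p) = c * E p.
Proof. by move=> hp; have := @pexp_lin c p 0 hp (deg_le0 _ _ _); rewrite !addr0 pexp0 addr0. Qed.

Lemma pexpD p q : deg_le p 4 -> deg_le q 4 -> E (p + q) = E p + E q.
Proof. by move=> hp hq; have := @pexp_lin 1 p q hp hq; rewrite scale1r mul1r. Qed.

Lemma pexpB p q : deg_le p 4 -> deg_le q 4 -> E (p - q) = E p - E q.
Proof. by move=> hp hq; rewrite -scaleN1r pexpD ?pexpZ ?mulN1r //; apply: deg_leZ. Qed.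

Lemma pexpMn p m : deg_le p 4 -> E (p *+ m) = m%:R * E p.
Proof. by move=> hp; rewrite -scaler_nat pexpZ. Qed.

Lemma pexp_sqr_ge0 q : deg_le q 2 -> 0 <= E (q ^+ 2).
Proof.
case: hE => _ _ sq hq; rewrite expr2; apply: sq; apply: deg_leW hq.
by rewrite -[2%N]/(4./2); apply: half_leq.
Qed.

Lemma pexp_sos2_ge0 p : sos2 p -> 0 <= E p.
Proof.
move=> [s [hs ->]]; elim: s hs => [|[c q] s ih]; first by rewrite big_nil pexp0.
rewrite big_cons /= => /andP[/andP[c0 hq] hs].
rewrite pexp_lin ?(deg_leX 2 hq) ?deg_le_sos2 //; last by exists s.
by rewrite addr_ge0 ?ih ?mulr_ge0 ?pexp_sqr_ge0.
Qed.

Lemma pexp_le_sos2 p q : deg_le p 4 -> deg_le q 4 -> sos2 (q - p) -> E p <= E q.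
Proof. by move=> hp hq /pexp_sos2_ge0; rewrite pexpB // subr_ge0. Qed.

(* E[p^2] = 0 forces E[p] = 0, because E[(p - E p)^2] >= 0. *)
Lemma pexp_sqr_add1 (p : P) : deg_le p 2 -> E (p ^+ 2) = 0 -> E ((p + 1) ^+ 2) = 1.
Proof.
move=> hp hp0.
have hp4 : deg_le p 4 by apply: deg_leW hp.
have hpp : deg_le (p ^+ 2) 4 by apply: (deg_leX 2 hp).
have E1 : E 1 = 1 by case: hE.
have Eshift (s : R) : E ((p + s *: 1) ^+ 2) = (s *+ 2) * E p + s ^+ 2.
  rewrite sqrrD -scalerAr mulr1 scalerMnl exprZn expr1n.
  rewrite !pexpD ?pexpZ ?E1 ?hp0 ?mulr1 ?add0r //;
    by rewrite ?deg_leD ?deg_leZ ?deg_le1.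
have Ep0 : E p = 0.
  have := pexp_sqr_ge0 (deg_leD hp (deg_leZ (- E p) (deg_le1 _ _ 2))).
  rewrite Eshift mulNrn mulNr sqrrN -mulr_natl expr2 => h.
  by apply/eqP; rewrite -sqrf_eq0 eq_le sqr_ge0 andbT expr2; nra.
by have := Eshift 1; rewrite scale1r Ep0 mulr0 add0r expr1n.
Qed.

Lemma pexp_sum_fvar_sqr : E ((norm2sq R - 1) ^+ 2) = 0 ->
  let S := \sum_(u : U) fvar R u ^+ 2 in E (S * S) = #|U|%:R ^+ 2.
Proof.
move=> hE0 S; have dS : deg_le S 2 by apply: deg_le_sum_sqr; apply: deg_le_fvar.
have := pexp_sqr_add1 (deg_leB (deg_leZ _ dS) (deg_le1 _ _ 2)) hE0.
rewrite subrK /norm2sq exprZn pexpZ -?expr2 ?(deg_leX 2 dS) // => h.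
have [U0|U0] := eqVneq (#|U|%:R : R) 0.
  by move: h; rewrite U0 invr0 expr0n mul0r => /eqP; rewrite eq_sym oner_eq0.
move: h => /(congr1 (fun y => #|U|%:R ^+ 2 * y)).
by rewrite mulr1 mulrA -exprMn mulfV // expr1n mul1r.
Qed.

End PseudoExpectation.

Section Cube.
Variables (R : realType) (n : nat).
Local Notation coord := (@Defs.coord R n).
Local Notation chi := (@Defs.chi R n).
Local Notation N := #|{: cube n}|.
Implicit Types (i j : 'I_n) (al be : {set 'I_n}).

Definition flip (i : 'I_n) (x : cube n) : cube n :=
  [ffun j => if j == i then ~~ x j else x j].

Lemma flipK i : involutive (flip i).
Proof. by move=> x; apply/ffunP => j; rewrite !ffunE; case: eqP; rewrite ?negbK. Qed.

Lemma coord_flip i x : coord (flip i x) i = - coord x i.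
Proof. by rewrite /Defs.coord ffunE eqxx; case: (x i); rewrite ?opprK. Qed.

Lemma coord_flip_neq i j x : j != i -> coord (flip i x) j = coord x j.
Proof. by move=> /negbTE ji; rewrite /Defs.coord ffunE ji. Qed.

Lemma coord_sqr x i : coord x i ^+ 2 = 1.
Proof. by rewrite /Defs.coord; case: (x i); rewrite ?sqrrN expr1n. Qed.

Lemma chi_flip_notin i al x : i \notin al -> chi al (flip i x) = chi al x.
Proof.
by move=> iNal; apply: eq_bigr => j jal; rewrite coord_flip_neq //; apply: contraNneq iNal => <-.
Qed.

Lemma chi_setU1 i al x : i \notin al -> chi (i |: al) x = coord x i * chi al x.
Proof. by move=> iNal; rewrite /Defs.chi big_setU1. Qed.

Lemma chi_flip_in i al x : i \in al -> chi al (flip i x) = - chi al x.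
Proof.
move=> ial; rewrite -(setD1K ial) !chi_setU1 ?setD11 //.
by rewrite chi_flip_notin ?setD11 // coord_flip mulNr.
Qed.

Lemma chi_sqr al x : chi al x ^+ 2 = 1.
Proof. by rewrite /Defs.chi -prodrXl big1 // => i _; apply: coord_sqr. Qed.

Lemma card_cube_gt0 : (0 < N)%N.
Proof. by apply/card_gt0P; exists [ffun=> false]. Qed.

Section Sums.
Variable W : lmodType R.

Lemma sum_flip_odd i (F : cube n -> W) :
  (forall x, F (flip i x) = - F x) -> \sum_x F x = 0.
Proof.
move=> Fodd; set S := \sum_x _.
have : S *+ 2 = 0.
  rewrite mulr2n {1}/S (reindex_inj (can_inj (flipK i))) /= -big_split /=.
  by apply: big1 => x _; rewrite Fodd addNr.
by rewrite -scaler_nat => /eqP; rewrite scaler_eq0 pnatr_eq0 /= => /eqP.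
Qed.

Lemma sum_coord_flip_even i (G : cube n -> W) :
  (forall x, G (flip i x) = G x) -> \sum_x coord x i *: G x = 0.
Proof.
move=> Geven; apply: (sum_flip_odd (i := i) (F := fun x => coord x i *: G x)) => x.
by rewrite coord_flip Geven scaleNr.
Qed.

Definition fourier_inv (a : {set 'I_n} -> W) (x : cube n) : W :=
  \sum_al chi al x *: a al.

(* Fourier coefficients of E_i f and D_i f, for f = fourier_inv a. *)
Definition expect_coef (i : 'I_n) (a : {set 'I_n} -> W) al :=
  if i \in al then 0 else a al.
Definition deriv_coef (i : 'I_n) (a : {set 'I_n} -> W) al :=
  if i \in al then 0 else a (i |: al).

Lemma fourier_inv_split i (a : {set 'I_n} -> W) x :
  fourier_inv a x =
  fourier_inv (expect_coef i a) x + coord x i *: fourier_inv (deriv_coef i a) x.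
Proof.
rewrite /fourier_inv (bigID (fun al => i \in al)) [LHS]addrC /=; congr (_ + _).
  rewrite [RHS](bigID (fun al => i \in al)) [X in _ = X + _]big1 ?add0r /= => [|al ial];
    last by rewrite /expect_coef ial scaler0.
  by apply: eq_bigr => al /negbTE ial; rewrite /expect_coef ial.
rewrite scaler_sumr [RHS](bigID (fun al => i \in al)) [X in _ = X + _]big1 ?add0r /= => [|al ial];
  last by rewrite /deriv_coef ial !scaler0.
rewrite (reindex_onto (fun al => i |: al) (fun al => al :\ i)) /= => [|al]; last exact: setD1K.
apply: eq_big => be; last first.
  by move=> /andP[_ /eqP <-]; rewrite /deriv_coef setD11 scalerA chi_setU1 ?setD11.
rewrite setU11 /=; have [ibe|iNbe] := boolP (i \in be); last by rewrite setU1K ?eqxx.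
by apply/negbTE/eqP => e; move: ibe; rewrite -e setD11.
Qed.

Lemma fourier_inv_flip i (a : {set 'I_n} -> W) x :
  (forall al, i \in al -> a al = 0) ->
  fourier_inv a (flip i x) = fourier_inv a x.
Proof.
move=> ai; apply: eq_bigr => al _.
by have [/ai ->|ial] := boolP (i \in al); rewrite ?scaler0 // chi_flip_notin.
Qed.

Lemma expect_coef_flip i (a : {set 'I_n} -> W) x :
  fourier_inv (expect_coef i a) (flip i x) = fourier_inv (expect_coef i a) x.
Proof. by rewrite fourier_inv_flip // => al; rewrite /expect_coef => ->. Qed.

Lemma deriv_coef_flip i (a : {set 'I_n} -> W) x :
  fourier_inv (deriv_coef i a) (flip i x) = fourier_inv (deriv_coef i a) x.
Proof. by rewrite fourier_inv_flip // => al; rewrite /deriv_coef => ->. Qed.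

End Sums.

Lemma sum_chi_mul al be :
  \sum_x chi al x * chi be x = if al == be then N%:R else 0.
Proof.
have [<-|ne] := eqVneq.
  by under eq_bigr do rewrite -expr2 chi_sqr; rewrite sumr_const.
have [i hi] : exists i, (i \in al) != (i \in be).
  apply/existsP; apply: contraNT ne; rewrite negb_exists => /forallP h.
  by apply/eqP/setP => i; move/negPn/eqP: (h i).
apply: (sum_flip_odd (i := i) (F := fun x => chi al x * chi be x : R^o)) => x.
case: (boolP (i \in al)) (boolP (i \in be)) hi => ial [] ibe //= _.
  by rewrite chi_flip_in // chi_flip_notin // mulNr.
by rewrite chi_flip_notin // chi_flip_in // mulrN.
Qed.

Section Parseval.
Variable V : comAlgType R.

Lemma sum_fourier_inv_sqr (c : {set 'I_n} -> V) :
  \sum_x fourier_inv c x ^+ 2 = N%:R *: \sum_al c al ^+ 2.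
Proof.
transitivity (\sum_x \sum_al \sum_be (chi al x * chi be x) *: (c al * c be)).
  apply: eq_bigr => x _; rewrite expr2 /fourier_inv mulr_suml; apply: eq_bigr => al _.
  rewrite mulr_sumr; apply: eq_bigr => be _.
  by rewrite -scalerAl -scalerAr scalerA.
rewrite exchange_big scaler_sumr; apply: eq_bigr => al _ /=.
rewrite exchange_big (bigD1 al) //= -scaler_suml sum_chi_mul eqxx expr2.
rewrite [X in _ + X]big1 ?addr0 // => be /negbTE bal.
by rewrite -scaler_suml sum_chi_mul eq_sym bal scale0r.
Qed.

Lemma sum_mul_fourier_inv (f : cube n -> V) (c : {set 'I_n} -> V) :
  \sum_x f x * fourier_inv c x = N%:R *: \sum_al c al * fourier f al.
Proof.
rewrite /fourier /fourier_inv; under eq_bigr do rewrite mulr_sumr.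
rewrite exchange_big scaler_sumr; apply: eq_bigr => al _ /=.
rewrite scalerAr scalerA mulfV ?pnatr_eq0 -?lt0n ?card_cube_gt0 // scale1r mulr_sumr.
by apply: eq_bigr => x _; rewrite -!scalerAr mulrC.
Qed.

End Parseval.
End Cube.

Section SquareSums.
Variables (R : realType) (n : nat) (V : comAlgType R).
Local Notation coord := (@Defs.coord R n).
Local Notation fi := (@fourier_inv R n V).

Definition sum_sq (g : cube n -> V) : V := \sum_x g x ^+ 2.
Definition sum_sq2 (g k : cube n -> V) : V := \sum_x g x ^+ 2 * k x ^+ 2.

Lemma sum_sq2C g k : sum_sq2 g k = sum_sq2 k g.
Proof. by apply: eq_bigr => x _; rewrite mulrC. Qed.

Lemma sqr_add_coord (A B : V) x i :
  (A + coord x i *: B) ^+ 2 = A ^+ 2 + B ^+ 2 + coord x i *: (A * B *+ 2).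
Proof. by rewrite /Defs.coord; case: (x i); rewrite ?scaleN1r ?scale1r; ring. Qed.

Lemma sqr_mul_add_coord (A B C D : V) x i :
  (A + coord x i *: B) ^+ 2 * (C + coord x i *: D) ^+ 2 =
  A ^+ 2 * C ^+ 2 + A ^+ 2 * D ^+ 2 *+ 3 + B ^+ 2 * C ^+ 2 *+ 3 + B ^+ 2 * D ^+ 2
  - (A * D - B * C) ^+ 2 *+ 2
  + coord x i *: ((A * B * (C ^+ 2 + D ^+ 2) + C * D * (A ^+ 2 + B ^+ 2)) *+ 2).
Proof. by rewrite /Defs.coord; case: (x i); rewrite ?scaleN1r ?scale1r; ring. Qed.

Lemma sum_sq_split i a :
  sum_sq (fi a) = sum_sq (fi (expect_coef i a)) + sum_sq (fi (deriv_coef i a)).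
Proof.
rewrite /sum_sq; under eq_bigr do rewrite (fourier_inv_split i) sqr_add_coord.
rewrite !big_split /= sum_coord_flip_even ?addr0 // => x.
by rewrite expect_coef_flip deriv_coef_flip.
Qed.

(* The cross terms are bounded through
   2 g0 g1 k0 k1 = g0^2 k1^2 + g1^2 k0^2 - (g0 k1 - g1 k0)^2, which is where
   the factor 3 per unit of degree comes from. *)
Lemma sum_sq2_split i a b :
  let g0 := fi (expect_coef i a) in let g1 := fi (deriv_coef i a) in
  let k0 := fi (expect_coef i b) in let k1 := fi (deriv_coef i b) in
  sum_sq2 (fi a) (fi b) =
  sum_sq2 g0 k0 + sum_sq2 g0 k1 *+ 3 + sum_sq2 g1 k0 *+ 3 + sum_sq2 g1 k1
  - (\sum_x (g0 x * k1 x - g1 x * k0 x) ^+ 2) *+ 2.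
Proof.
move=> g0 g1 k0 k1; rewrite /sum_sq2.
under eq_bigr do rewrite (fourier_inv_split i a) (fourier_inv_split i b) sqr_mul_add_coord.
rewrite big_split /= sum_coord_flip_even => [|x]; last first.
  by rewrite !(expect_coef_flip, deriv_coef_flip).
by rewrite addr0 sumrB -!sumrMnl -!big_split.
Qed.

End SquareSums.

Section Bonami.
Variables (R : realType) (U : finType) (n : nat).
Local Notation P := (fpoly R U).
Local Notation fi := (@fourier_inv R n P).
Local Notation N := #|{: cube n}|.
Implicit Types (i j : 'I_n) (al : {set 'I_n}) (a b : {set 'I_n} -> P).

(* [a] is the coefficient family of a function of degree <= d that depends
   only on the first m coordinates and whose values are linear forms. *)
Definition junta_coef (m d : nat) a : Prop :=
  [/\ forall al, deg_le (a al) 1,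
      forall al i, i \in al -> (m <= i)%N -> a al = 0 &
      forall al, (d < #|al|)%N -> a al = 0].

Definition bonami_bound (d1 d2 : nat) (g k : cube n -> P) : Prop :=
  sos2 (sum_sq g * sum_sq k *+ 3 ^ (d1 + d2) - sum_sq2 g k *+ N).

Lemma deg_le_sum_sq2 (g k : cube n -> P) :
  (forall x, deg_le (g x) 1) -> (forall x, deg_le (k x) 1) -> deg_le (sum_sq2 g k) 4.
Proof.
by move=> hg hk; apply: deg_le_sum => x; apply: (deg_leM (deg_leX 2 (hg x)) (deg_leX 2 (hk x))).
Qed.

Lemma deg_le_fourier_inv m d a x : junta_coef m d a -> deg_le (fi a x) 1.
Proof. by move=> [ha _ _]; apply: deg_le_sum => al; apply: deg_leZ. Qed.

Lemma junta_coefW m d d' a : (d <= d')%N -> junta_coef m d a -> junta_coef m d' a.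
Proof. by move=> dd' [h1 h2 h3]; split=> // al hal; apply/h3/leq_trans/hal. Qed.

Section Step.
Variables (m : nat) (i : 'I_n).
Hypothesis hi : val i = m.

Lemma ltn_notin al j : i \notin al -> j \in al -> (m <= j)%N -> (m < j)%N.
Proof.
move=> iNal jal; rewrite leq_eqVlt => /predU1P[mj|//].
by move: iNal; rewrite (_ : i = j) ?jal //; apply: val_inj; rewrite hi.
Qed.

Lemma junta_coef_expect d a : junta_coef m.+1 d a -> junta_coef m d (expect_coef i a).
Proof.
rewrite /expect_coef => -[h1 h2 h3]; split=> [al|al j jal mj|al hal].
- by case: ifP => _; [apply: deg_le0 | apply: h1].
- by case: ifPn => // iNal; exact: (h2 _ j jal (ltn_notin iNal jal mj)).
- by case: ifPn => // _; apply: h3.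
Qed.

Lemma junta_coef_deriv d a : junta_coef m.+1 d a -> junta_coef m d.-1 (deriv_coef i a).
Proof.
rewrite /deriv_coef => -[h1 h2 h3]; split=> [al|al j jal mj|al hal].
- by case: ifP => _; [apply: deg_le0 | apply: h1].
- by case: ifPn => // iNal; exact: (h2 _ j (setU1r _ jal) (ltn_notin iNal jal mj)).
- by case: ifPn => // iNal; apply: h3; rewrite cardsU1 iNal add1n; case: d hal.
Qed.

Lemma fourier_inv_deriv_coef0 a x : junta_coef m.+1 0 a -> fi (deriv_coef i a) x = 0.
Proof.
move=> [_ _ h3]; apply: big1 => al _.
by rewrite /deriv_coef; case: ifPn => [|iNal]; rewrite ?h3 ?scaler0 // cardsU1 iNal.
Qed.

Hypothesis IH : forall d1 d2 a b,
  junta_coef m d1 a -> junta_coef m d2 b -> bonami_bound d1 d2 (fi a) (fi b).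

Lemma bonami_mixed d1 d2 a b : junta_coef m.+1 d1 a -> junta_coef m.+1 d2 b ->
  sos2 (sum_sq (fi (expect_coef i a)) * sum_sq (fi (deriv_coef i b)) *+ 3 ^ (d1 + d2)
        - sum_sq2 (fi (expect_coef i a)) (fi (deriv_coef i b)) *+ (3 * N)).
Proof.
case: d2 => [|d2] ha hb.
  have k0 x : fi (deriv_coef i b) x = 0 by apply: fourier_inv_deriv_coef0.
  rewrite /sum_sq /sum_sq2 [X in _ * X]big1 ?[X in _ - X *+ _]big1 => [|x _|x _].
  - by rewrite mulr0 !mul0rn subr0; apply: sos2_0.
  - by rewrite k0 expr0n mulr0.
  - by rewrite k0 expr0n.
apply: eq_ind (sos2Mn 3 (IH (junta_coef_expect ha) (junta_coef_deriv hb))) _ _.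
by rewrite addnS expnS; ring.
Qed.

Lemma bonami_step d1 d2 a b : junta_coef m.+1 d1 a -> junta_coef m.+1 d2 b ->
  bonami_bound d1 d2 (fi a) (fi b).
Proof.
move=> ha hb.
have ha0 := junta_coef_expect ha; have ha1 := junta_coef_deriv ha.
have hb0 := junta_coef_expect hb; have hb1 := junta_coef_deriv hb.
have h00 := IH ha0 hb0.
have h11 := IH (junta_coefW (leq_pred d1) ha1) (junta_coefW (leq_pred d2) hb1).
have h01 := bonami_mixed ha hb.
have h10 := bonami_mixed hb ha; rewrite sum_sq2C mulrC addnC in h10.
have hcross : sos2 ((\sum_x (fi (expect_coef i a) x * fi (deriv_coef i b) x
                          - fi (deriv_coef i a) x * fi (expect_coef i b) x) ^+ 2) *+ (2 * N)).
  apply/sos2Mn/sos2_sum => x; apply/sos2_sqr/deg_leB.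
    exact: deg_leM (deg_le_fourier_inv x ha0) (deg_le_fourier_inv x hb1).
  exact: deg_leM (deg_le_fourier_inv x ha1) (deg_le_fourier_inv x hb0).
rewrite /bonami_bound (sum_sq_split i a) (sum_sq_split i b) (sum_sq2_split i a b) /=.
by apply: eq_ind (sos2D (sos2D (sos2D (sos2D h00 h01) h10) h11) hcross) _ _; ring.
Qed.

End Step.

Lemma fourier_inv_junta0 d a x : junta_coef 0 d a -> fi a x = a set0.
Proof.
move=> [_ a0 _]; rewrite /fourier_inv (bigD1 set0) //= big1 ?addr0.
  by rewrite /Defs.chi big_set0 scale1r.
move=> al al0; case: (set_0Vmem al) => [e|[i ial]]; first by rewrite e eqxx in al0.
by rewrite (a0 al i ial) ?scaler0.
Qed.

Lemma bonami_base d1 d2 a b : junta_coef 0 d1 a -> junta_coef 0 d2 b ->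
  bonami_bound d1 d2 (fi a) (fi b).
Proof.
move=> ha hb; rewrite /bonami_bound /sum_sq /sum_sq2.
under eq_bigr do rewrite (fourier_inv_junta0 _ ha).
under [X in _ * X]eq_bigr do rewrite (fourier_inv_junta0 _ hb).
under [X in _ - X *+ _]eq_bigr do rewrite (fourier_inv_junta0 _ ha) (fourier_inv_junta0 _ hb).
have [k ->] : exists k, (3 ^ (d1 + d2) = k.+1)%N.
  by exists (3 ^ (d1 + d2)).-1; rewrite prednK ?expn_gt0.
rewrite !sumr_const.
apply: eq_ind (sos2Mn (N * N * k) (sos2_sqr (q := a set0 * b set0) _)) _ _; last by ring.
by case: ha hb => ha1 _ _ [hb1 _ _]; apply: deg_leM (ha1 _) (hb1 _).
Qed.

Lemma bonami_junta m d1 d2 a b : (m <= n)%N ->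
  junta_coef m d1 a -> junta_coef m d2 b -> bonami_bound d1 d2 (fi a) (fi b).
Proof.
elim: m d1 d2 a b => [|m IH] d1 d2 a b mn; first exact: bonami_base.
by apply: (bonami_step (i := Ordinal mn)) => // ? ? ? ?; apply: IH; apply: ltnW.
Qed.

End Bonami.

Section LowDegree.
Variables (R : realType) (n d : nat).
Local Notation U := (cube n).
Local Notation P := (fpoly R U).
Local Notation chi := (@Defs.chi R n).
Local Notation fi := (@fourier_inv R n P).
Local Notation N := #|{: cube n}|.

Definition lowdeg_coef (al : {set 'I_n}) : P :=
  if (#|al| <= d)%N then fourier (@fvar R U) al else 0.

Local Notation Pf := (fi lowdeg_coef).

Lemma fourier_indicator (u : U) (al : {set 'I_n}) :
  fourier (fun x => (x == u)%:R : R^o) al = N%:R^-1 * chi al u.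
Proof.
rewrite /fourier (bigD1 u) //= big1 ?addr0 => [|x /negbTE xu]; last first.
  by rewrite xu [_ *: _]mulr0.
by rewrite eqxx [X in _ *: X]mulr1.
Qed.

Lemma formal_apply_lowdeg v : formal_apply (@lowdeg R n d) v = Pf v.
Proof.
rewrite /formal_apply /lowdeg /fourier_inv /lowdeg_coef.
under eq_bigr do rewrite scaler_suml; under eq_bigr do under eq_bigr do rewrite fourier_indicator.
rewrite exchange_big big_mkcond /=; apply: eq_bigr => al _.
case: ifP => _; last by rewrite scaler0.
rewrite /fourier !scaler_sumr; apply: eq_bigr => u _.
by rewrite !scalerA mulrC mulrA.
Qed.

Lemma norm4pow4_lowdeg : norm4pow4 (@lowdeg R n d) = N%:R^-1 *: sum_sq2 Pf Pf.
Proof.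
rewrite /norm4pow4; congr (_ *: _); apply: eq_bigr => v _.
by rewrite formal_apply_lowdeg -exprD.
Qed.

Lemma junta_coef_lowdeg : junta_coef n d lowdeg_coef.
Proof.
split=> [al|al i _|al]; rewrite /lowdeg_coef.
- case: ifP => _; last exact: deg_le0.
  by apply/deg_leZ/deg_le_sum => u; apply/deg_leZ/deg_le_fvar.
- by rewrite leqNgt ltn_ord.
- by move=> hal; rewrite leqNgt hal.
Qed.

Lemma deg_le_lowdeg u : deg_le (Pf u) 1.
Proof. exact: deg_le_fourier_inv junta_coef_lowdeg. Qed.

Lemma deg_le_sum_sq2_lowdeg : deg_le (sum_sq2 Pf Pf) 4.
Proof. exact: deg_le_sum_sq2 deg_le_lowdeg deg_le_lowdeg. Qed.

(* P_d is an orthogonal projection: <f, P_d f> = <P_d f, P_d f>. *)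
Lemma sum_fvar_mul_lowdeg : \sum_(u : U) fvar R u * Pf u = sum_sq Pf.
Proof.
rewrite sum_mul_fourier_inv /sum_sq sum_fourier_inv_sqr; congr (_ *: _).
by apply: eq_bigr => al _; rewrite /lowdeg_coef expr2; case: ifP; rewrite ?mul0r.
Qed.

Lemma sum_sq_sub_lowdeg :
  \sum_(u : U) fvar R u ^+ 2 = \sum_(u : U) (fvar R u - Pf u) ^+ 2 + sum_sq Pf.
Proof.
have e u : fvar R u ^+ 2 = (fvar R u - Pf u) ^+ 2 + Pf u ^+ 2 + (fvar R u * Pf u - Pf u ^+ 2) *+ 2.
  by ring.
rewrite (eq_bigr _ (fun u _ => e u)) big_split [X in X + _ = _]big_split /=.
by rewrite sumrMnl sumrB sum_fvar_mul_lowdeg subrr mul0rn addr0.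
Qed.

Variables (r : nat) (E : P -> R).
Hypotheses (hE : pseudo_expectation r E) (hr : (4 <= r)%N).

Lemma pexp_bonami_lowdeg :
  N%:R * E (sum_sq2 Pf Pf) <= 9 ^+ d * E (sum_sq Pf * sum_sq Pf).
Proof.
have dQ : deg_le (sum_sq Pf) 2 by apply: deg_le_sum_sqr deg_le_lowdeg.
have := pexp_le_sos2 hE hr (deg_leMn _ deg_le_sum_sq2_lowdeg) (deg_leMn _ (deg_leM dQ dQ))
          (bonami_junta (leqnn n) junta_coef_lowdeg junta_coef_lowdeg).
by rewrite !(pexpMn hE hr) ?deg_le_sum_sq2_lowdeg ?(deg_leM dQ dQ) // expnD -expnMn natrX.
Qed.

Lemma pexp_sum_sq_lowdeg_le :
  let S := \sum_(u : U) fvar R u ^+ 2 in E (sum_sq Pf * sum_sq Pf) <= E (S * S).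
Proof.
have dQ : deg_le (sum_sq Pf) 2 by apply: deg_le_sum_sqr deg_le_lowdeg.
have dS : deg_le (\sum_(u : U) fvar R u ^+ 2) 2 by apply: deg_le_sum_sqr; apply: deg_le_fvar.
apply: (pexp_le_sos2 hE hr (deg_leM dQ dQ) (deg_leM dS dS)).
rewrite sum_sq_sub_lowdeg; apply: sos2_sqr_sub deg_le_lowdeg => u.
by rewrite deg_leB ?deg_le_fvar ?deg_le_lowdeg.
Qed.

End LowDegree.

Theorem theorem2p2 (R : realType) (n d : nat) (hdn : (d <= n)%N) (t : R) :
  tensor_sdp_value 4 (@lowdeg R n d) t -> t <= 9 ^+ d.
Proof.
move=> [E [hE hE0 ->]]; have hr : (4 <= 4)%N by [].
have K0 : 0 < #|{: cube n}|%:R :> R by rewrite ltr0n card_cube_gt0.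
have C0 : 0 <= 9 ^+ d :> R by rewrite exprn_ge0.
have bonami := pexp_bonami_lowdeg d hE hr.
have proj := pexp_sum_sq_lowdeg_le d hE hr.
have norm := pexp_sum_fvar_sqr hE hr hE0; rewrite /= in proj norm.
rewrite norm4pow4_lowdeg (pexpZ hE hr) ?deg_le_sum_sq2_lowdeg // ler_pdivrMl //.
nra.
Qed.
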